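(* Let $\mathbf m^*=(\mathbf x^*,\mathbf p^* )$ be an efficient stationary profile of the mechanism (with constants $\kappa^*>0$, $\gamma>0$, $w^*_{j,l}$). Then every agent weakly prefers its outcome to the initial allocation $(\mathbf 0,0)$: for every $i\in\mathcal A$, $U_i(\mathbf x_i^* )-t_i(\mathbf m^* )\ge U_i(\mathbf 0)-0=0$.
   Context: Agents $\mathcal A=\{1,\dots,m\}$; finite set of divisible goods $\mathcal L$ with capacities $c_l\ge 0$. Each agent $i$ has a fixed subset $\mathcal L_i\subseteq\mathcal L$ of goods it may request; $\mathcal A_l=\{i:l\in\mathcal L_i\}$, assumed to satisfy $|\mathcal A_l|\ge 3$. Each utility $U_i:\mathbb R^{|\mathcal L_i|}\to\mathbb R$ is differentiable and concave with $U_i(\mathbf 0)=0$. A message of agent $i$ is $\mathbf m_i=(\mathbf x_i,\mathbf p_i)$ with $0\le x_{i,l}\le c_l$ and $0\le p_{i,l}\le M$, $l\in\mathcal L_i$, for a fixed $0<M<\infty$. For a good $l$ write $N=|\mathcal A_l|$, $\bar p_l=\frac1N\sum_{j\in\mathcal A_l}p_{j,l}$, $p_{-i,l}=\frac1{N-1}\sum_{j\in\mathcal A_l,j\ne i}p_{j,l}$, $w_{-i,l}=\frac1{N-1}\sum_{j\in\mathcal A_l,j\ne i}w_{j,l}$, $\mathcal E_{-i,l}=\sum_{j\in\mathcal A_l,j\neq i}x_{j,l}-c_l$. Tax of agent $i$ for good $l$ (given $\kappa>0$, $\gamma>0$, numbers $w_{j,l}\ge0$): $t_{i,l}=w_{-i,l}x_{i,l}+\frac1\kappa|p_{i,l}-\bar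 p_l|^2-w_{-i,l}(p_{i,l}-p_{-i,l})\frac{x_{i,l}+\mathcal E_{-i,l}}{\gamma}+\phi_{i,l}$, with $\bar p_l$ computed including agent $i$'s own $p_{i,l}$ and $\phi_{i,l}$ depending only on the messages of agents other than $i$; at the profile $\mathbf m^*$ considered, $\phi_{i,l}=-w^*_l\,\frac{1}{N-1}\sum_{j\in\mathcal A_l,j\ne i}x^*_{j,l}$. Total tax $t_i=\sum_{l\in\mathcal L_i}t_{i,l}$. A profile $\mathbf m^*$ is a stationary profile if for every $i$ and every admissible $\mathbf m_i$: $U_i(\mathbf x_i^* )-t_i(\mathbf m_i^*,\mathbf m_{-i}^* )\ge U_i(\mathbf x_i)-t_i(\mathbf m_i,\mathbf m_{-i}^* )$. It is an efficient stationary profile if moreover $w^*_{i,l}=w^*_{j,l}=w^*_{-i,l}=:w^*_l$ for all $l\in\mathcal L$, $i,j\in\mathcal A_l$. *)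

From Stdlib Require Import Reals Lra List Arith.
Open Scope R_scope.

(* Conventions: agents are 0..m-1, goods are 0..nL-1.
   inL i l : good l belongs to L_i.
   A message profile is a pair (x, p) of functions agent -> good -> R;
   only entries x i l, p i l with l in L_i are meaningful. *)

Definition sumR (s : list nat) (f : nat -> R) : R :=
  fold_right (fun j acc => f j + acc) 0 s.

Definition goods_of (nL : nat) (inL : nat -> nat -> bool) (i : nat) : list nat :=
  filter (fun l => inL i l) (List.seq 0 nL).

Definition agents_of (m : nat) (inL : nat -> nat -> bool) (l : nat) : list nat :=
  filter (fun i => inL i l) (List.seq 0 m).

Definition others (m : nat) (inL : nat -> nat -> bool) (l i : nat) : list nat :=
  filter (fun j => negb (Nat.eqb j i)) (agents_of m inL l).

Definition upd (z : nat -> nat -> R) (i : nat) (v : nat -> R) : nat -> nat -> R :=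
  fun j l => if Nat.eqb j i then v l else z j l.

Definition admissible (nL : nat) (inL : nat -> nat -> bool) (c : nat -> R) (M : R)
  (i : nat) (xi pi : nat -> R) : Prop :=
  forall l, In l (goods_of nL inL i) ->
    0 <= xi l <= c l /\ 0 <= pi l <= M.

Definition tax_il (m : nat) (inL : nat -> nat -> bool) (c : nat -> R)
  (w : nat -> nat -> R) (kappa gamma : R)
  (phi : nat -> nat -> (nat -> nat -> R) -> (nat -> nat -> R) -> R)
  (x p : nat -> nat -> R) (i l : nat) : R :=
  let N := INR (length (agents_of m inL l)) in
  let pbar := / N * sumR (agents_of m inL l) (fun j => p j l) in
  let pmi := / (N - 1) * sumR (others m inL l i) (fun j => p j l) in
  let wmi := / (N - 1) * sumR (others m inL l i) (fun j => w j l) in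
  let E := sumR (others m inL l i) (fun j => x j l) - c l in
  wmi * x i l + / kappa * (Rabs (p i l - pbar)) ^ 2
  - wmi * (p i l - pmi) * (x i l + E) / gamma + phi i l x p.

Definition tax (m nL : nat) (inL : nat -> nat -> bool) (c : nat -> R)
  (w : nat -> nat -> R) (kappa gamma : R)
  (phi : nat -> nat -> (nat -> nat -> R) -> (nat -> nat -> R) -> R)
  (x p : nat -> nat -> R) (i : nat) : R :=
  sumR (goods_of nL inL i) (fun l => tax_il m inL c w kappa gamma phi x p i l).

Definition differentiable_on_coords (S : list nat) (U : (nat -> R) -> R) : Prop :=
  forall xv : nat -> R,
  exists g : nat -> R,
  forall eps : R, 0 < eps -> exists delta : R, 0 < delta /\
    forall h : nat -> R, (forall l, ~ In l S -> h l = 0) ->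
      sumR S (fun l => Rabs (h l)) < delta ->
      Rabs (U (fun l => xv l + h l) - U xv - sumR S (fun l => g l * h l))
        <= eps * sumR S (fun l => Rabs (h l)).

Definition concave_fun (U : (nat -> R) -> R) : Prop :=
  forall (xv yv : nat -> R) (t : R), 0 <= t <= 1 ->
    t * U xv + (1 - t) * U yv <= U (fun l => t * xv l + (1 - t) * yv l).

(* U depends only on the coordinates in S, i.e. U : R^{|S|} -> R. *)
Definition depends_only_on (S : list nat) (U : (nat -> R) -> R) : Prop :=
  forall xv yv : nat -> R, (forall l, In l S -> xv l = yv l) -> U xv = U yv.

Definition stationary (m nL : nat) (inL : nat -> nat -> bool) (c : nat -> R) (M : R)
  (U : nat -> (nat -> R) -> R) (w : nat -> nat -> R) (kappa gamma : R)
  (phi : nat -> nat -> (nat -> nat -> R) -> (nat -> nat -> R) -> R)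
  (xs ps : nat -> nat -> R) : Prop :=
  (forall i, (i < m)%nat -> admissible nL inL c M i (xs i) (ps i)) /\
  forall i, (i < m)%nat -> forall xi pi : nat -> R,
    admissible nL inL c M i xi pi ->
    U i (xs i) - tax m nL inL c w kappa gamma phi xs ps i
    >= U i xi - tax m nL inL c w kappa gamma phi (upd xs i xi) (upd ps i pi) i.

Definition efficient_w (m nL : nat) (inL : nat -> nat -> bool) (w : nat -> nat -> R) : Prop :=
  forall l, (l < nL)%nat -> forall i j,
    In i (agents_of m inL l) -> In j (agents_of m inL l) -> w i l = w j l.

From Stdlib Require Import Reals List Lra Lia.
Open Scope R_scope.

(* Idea: agent i can always deviate to the "null" message that requests
   nothing (x_{i,l} = 0) and quotes, for each of its goods l, the average
   price p_{-i,l} of the other agents.  With this price agent i's quote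
   equals the overall mean p̄_l, so the quadratic price penalty vanishes, and
   with x_{i,l} = 0 the remaining terms of t_{i,l} vanish except φ_{i,l},
   which is unaffected by i's own message.  At the efficient profile
   φ_{i,l} = -w*_l · (average of the others' requests) <= 0, so the null
   deviation yields utility at least U_i(0) - 0.  Stationarity then says the
   equilibrium outcome is at least as good. *)

Lemma sumR_ext (s : list nat) (f g : nat -> R) :
  (forall j, In j s -> f j = g j) -> sumR s f = sumR s g.
Proof.
  induction s as [|a s IH]; simpl; intros Hfg; [reflexivity|].
  rewrite Hfg, IH by auto; reflexivity.
Qed.

Lemma sumR_nonneg (s : list nat) (f : nat -> R) :
  (forall j, In j s -> 0 <= f j) -> 0 <= sumR s f.
Proof.
  induction s as [|a s IH]; simpl; intros Hf; [lra|].
  assert (0 <= f a) by auto. assert (0 <= sumR s f) by auto. lra.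
Qed.

Lemma sumR_nonpos (s : list nat) (f : nat -> R) :
  (forall j, In j s -> f j <= 0) -> sumR s f <= 0.
Proof.
  induction s as [|a s IH]; simpl; intros Hf; [lra|].
  assert (f a <= 0) by auto. assert (sumR s f <= 0) by auto. lra.
Qed.

Lemma sumR_le_const (s : list nat) (f : nat -> R) (M : R) :
  (forall j, In j s -> f j <= M) -> sumR s f <= INR (length s) * M.
Proof.
  induction s as [|a s IH]; intros Hf; simpl sumR; [simpl; lra|].
  change (length (a :: s)) with (S (length s)); rewrite S_INR.
  assert (f a <= M) by auto with datatypes.
  assert (sumR s f <= INR (length s) * M) by auto with datatypes. lra.
Qed.

Lemma filter_neq_notin (s : list nat) (i : nat) :
  ~ In i s -> filter (fun j => negb (Nat.eqb j i)) s = s.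
Proof.
  intros Hi. apply forallb_filter_id, forallb_forall. intros j Hj.
  destruct (Nat.eqb_spec j i); [subst; contradiction | reflexivity].
Qed.

Lemma sumR_remove (s : list nat) (f : nat -> R) (i : nat) :
  NoDup s -> In i s ->
  sumR s f = f i + sumR (filter (fun j => negb (Nat.eqb j i)) s) f.
Proof.
  induction s as [|a s IH]; simpl; intros Hnd Hin; [contradiction|].
  inversion Hnd as [|? ? Ha Hnd']; subst.
  destruct (Nat.eqb_spec a i) as [->|Hai]; simpl.
  - rewrite (filter_neq_notin s i Ha). reflexivity.
  - destruct Hin as [|Hin]; [contradiction|]. rewrite (IH Hnd' Hin). lra.
Qed.

Lemma length_remove (s : list nat) (i : nat) :
  NoDup s -> In i s ->
  S (length (filter (fun j => negb (Nat.eqb j i)) s)) = length s.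
Proof.
  induction s as [|a s IH]; simpl; intros Hnd Hin; [contradiction|].
  inversion Hnd as [|? ? Ha Hnd']; subst.
  destruct (Nat.eqb_spec a i) as [->|Hai]; simpl.
  - rewrite (filter_neq_notin s i Ha). reflexivity.
  - destruct Hin as [|Hin]; [contradiction|]. rewrite (IH Hnd' Hin). reflexivity.
Qed.

Lemma mean_of_leave_one_out_mean (s : list nat) (f : nat -> R) (i : nat) :
  NoDup s -> In i s -> 1 < INR (length s) ->
  f i = / (INR (length s) - 1) * sumR (filter (fun j => negb (Nat.eqb j i)) s) f ->
  / INR (length s) * sumR s f = f i.
Proof.
  intros Hnd Hin Hn Hfi.
  set (S := sumR (filter (fun j => negb (Nat.eqb j i)) s) f) in Hfi.
  assert (HS : S = (INR (length s) - 1) * f i) by (rewrite Hfi; field; lra).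
  rewrite (sumR_remove s f i Hnd Hin); fold S; rewrite HS. field; lra.
Qed.

Lemma in_agents_of m inL l j :
  In j (agents_of m inL l) <-> (j < m)%nat /\ inL j l = true.
Proof. unfold agents_of. rewrite filter_In, in_seq. split; intros [H1 H2]; split; auto; lia. Qed.

Lemma in_goods_of nL inL i l :
  In l (goods_of nL inL i) <-> (l < nL)%nat /\ inL i l = true.
Proof. unfold goods_of. rewrite filter_In, in_seq. split; intros [H1 H2]; split; auto; lia. Qed.

Lemma in_others m inL l i j :
  In j (others m inL l i) -> In j (agents_of m inL l) /\ j <> i.
Proof.
  unfold others. rewrite filter_In. intros [Hj Hneq]. split; [exact Hj|].
  intros ->. rewrite Nat.eqb_refl in Hneq. discriminate.
Qed.

Lemma agents_of_NoDup m inL l : NoDup (agents_of m inL l).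
Proof. apply NoDup_filter, seq_NoDup. Qed.

Lemma length_others m inL l i :
  In i (agents_of m inL l) ->
  INR (length (others m inL l i)) = INR (length (agents_of m inL l)) - 1.
Proof.
  intros Hi. rewrite <- (length_remove _ i (agents_of_NoDup m inL l) Hi), S_INR.
  unfold others. lra.
Qed.

Lemma sumR_others_upd m inL l i (z : nat -> nat -> R) (v : nat -> R) :
  sumR (others m inL l i) (fun j => upd z i v j l) = sumR (others m inL l i) (fun j => z j l).
Proof.
  apply sumR_ext. intros j Hj. apply in_others in Hj as [_ Hji].
  unfold upd. rewrite (proj2 (Nat.eqb_neq j i) Hji). reflexivity.
Qed.

Definition avg_others (m : nat) (inL : nat -> nat -> bool) (p : nat -> nat -> R)
  (i l : nat) : R :=
  / (INR (length (agents_of m inL l)) - 1) * sumR (others m inL l i) (fun j => p j l).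

Lemma avg_others_bounds m inL (p : nat -> nat -> R) (M : R) i l :
  In i (agents_of m inL l) -> 2 < INR (length (agents_of m inL l)) ->
  (forall j, In j (agents_of m inL l) -> 0 <= p j l <= M) ->
  0 <= avg_others m inL p i l <= M.
Proof.
  intros Hi HN Hp. unfold avg_others.
  set (N := INR (length (agents_of m inL l))) in *.
  assert (Hlo : 0 <= sumR (others m inL l i) (fun j => p j l)).
  { apply sumR_nonneg. intros j Hj. apply in_others in Hj as [Hj _]. apply Hp, Hj. }
  assert (Hhi : sumR (others m inL l i) (fun j => p j l) <= (N - 1) * M).
  { unfold N. rewrite <- (length_others m inL l i Hi). apply sumR_le_const.
    intros j Hj. apply in_others in Hj as [Hj _]. apply Hp, Hj. }
  assert (Hinv : 0 < / (N - 1)) by (apply Rinv_0_lt_compat; lra).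
  split; [apply Rmult_le_pos; lra|].
  apply (Rmult_le_reg_l (N - 1)); [lra|].
  rewrite <- Rmult_assoc, Rinv_r by lra. lra.
Qed.

(* Requesting nothing and quoting p_{-i,l} makes t_{i,l} collapse to the
   compensation term φ_{i,l}: the quote equals the mean p̄_l, so both the
   quadratic penalty and the pricing term vanish. *)
Lemma tax_il_null_deviation m inL c w kappa gamma phi (x p : nat -> nat -> R) i l :
  (forall x p x' p' : nat -> nat -> R,
      (forall j, j <> i -> forall l', x j l' = x' j l' /\ p j l' = p' j l') ->
      phi i l x p = phi i l x' p') ->
  In i (agents_of m inL l) -> 2 < INR (length (agents_of m inL l)) ->
  tax_il m inL c w kappa gamma phi
    (upd x i (fun _ => 0)) (upd p i (fun l' => avg_others m inL p i l')) i l
  = phi i l x p.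
Proof.
  intros Hphi Hi HN.
  set (p' := upd p i (fun l' => avg_others m inL p i l')).
  assert (Hown : p' i l = avg_others m inL p i l) by (unfold p', upd; rewrite Nat.eqb_refl; reflexivity).
  assert (Hothers : avg_others m inL p' i l = avg_others m inL p i l)
    by (unfold avg_others, p'; rewrite sumR_others_upd; reflexivity).
  assert (Hmean : / INR (length (agents_of m inL l)) * sumR (agents_of m inL l) (fun j => p' j l)
                  = avg_others m inL p i l).
  { rewrite <- Hown. apply (mean_of_leave_one_out_mean _ (fun j => p' j l) i);
      [apply agents_of_NoDup | exact Hi | lra |].
    rewrite Hown, <- Hothers. reflexivity. }
  assert (Hx : upd x i (fun _ => 0) i l = 0) by (unfold upd; rewrite Nat.eqb_refl; reflexivity).
  unfold tax_il; cbv zeta. fold (avg_others m inL p' i l).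
  rewrite Hmean, Hothers, Hown, Hx.
  rewrite (Hphi (upd x i (fun _ => 0)) p' x p).
  - unfold Rminus. rewrite Rplus_opp_r, Rabs_R0. unfold Rdiv. ring.
  - intros j Hji l'. unfold p', upd. rewrite (proj2 (Nat.eqb_neq j i) Hji). auto.
Qed.

Lemma compensation_nonpos m inL (w x : nat -> nat -> R) i l :
  2 < INR (length (agents_of m inL l)) ->
  (forall j, 0 <= w j l) -> (forall j, In j (agents_of m inL l) -> 0 <= x j l) ->
  - avg_others m inL w i l * avg_others m inL x i l <= 0.
Proof.
  intros HN Hw Hx.
  assert (Hinv : 0 <= / (INR (length (agents_of m inL l)) - 1))
    by (apply Rlt_le, Rinv_0_lt_compat; lra).
  assert (0 <= avg_others m inL w i l) by (apply Rmult_le_pos; [exact Hinv | apply sumR_nonneg; auto]).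
  assert (0 <= avg_others m inL x i l).
  { apply Rmult_le_pos; [exact Hinv|]. apply sumR_nonneg.
    intros j Hj. apply in_others in Hj as [Hj _]. auto. }
  assert (0 <= avg_others m inL w i l * avg_others m inL x i l) by (apply Rmult_le_pos; auto).
  lra.
Qed.

Theorem theorem1
  (m nL : nat) (inL : nat -> nat -> bool) (c : nat -> R) (M : R)
  (U : nat -> (nat -> R) -> R) (w : nat -> nat -> R) (kappa gamma : R)
  (phi : nat -> nat -> (nat -> nat -> R) -> (nat -> nat -> R) -> R)
  (xs ps : nat -> nat -> R)
  (Hc : forall l, (l < nL)%nat -> 0 <= c l)
  (HM : 0 < M)
  (Hkappa : 0 < kappa) (Hgamma : 0 < gamma)
  (HA : forall l, (l < nL)%nat -> (3 <= length (agents_of m inL l))%nat)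
  (HUdiff : forall i, (i < m)%nat -> differentiable_on_coords (goods_of nL inL i) (U i))
  (HUconc : forall i, (i < m)%nat -> concave_fun (U i))
  (HUdom : forall i, (i < m)%nat -> depends_only_on (goods_of nL inL i) (U i))
  (HU0 : forall i, (i < m)%nat -> U i (fun _ => 0) = 0)
  (Hw : forall j l, 0 <= w j l)
  (* phi_{i,l} depends only on the messages of agents other than i *)
  (Hphi_others : forall i l (x p x' p' : nat -> nat -> R),
      (forall j, j <> i -> forall l', x j l' = x' j l' /\ p j l' = p' j l') ->
      phi i l x p = phi i l x' p')
  (* value of phi_{i,l} at the considered profile m^* = (xs, ps); by efficiency
     w_{-i,l} = w*_l *)
  (Hphi_val : forall i l, (i < m)%nat -> In l (goods_of nL inL i) ->
      phi i l xs ps =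
        - (/ (INR (length (agents_of m inL l)) - 1)
             * sumR (others m inL l i) (fun j => w j l))
        * (/ (INR (length (agents_of m inL l)) - 1)
             * sumR (others m inL l i) (fun j => xs j l)))
  (Heff : efficient_w m nL inL w)
  (Hstat : stationary m nL inL c M U w kappa gamma phi xs ps) :
  forall i, (i < m)%nat ->
    U i (xs i) - tax m nL inL c w kappa gamma phi xs ps i >= U i (fun _ => 0) - 0.
Proof.
  intros i Hi. destruct Hstat as [Hadm Hbest].
  assert (HN : forall l, (l < nL)%nat -> 2 < INR (length (agents_of m inL l))).
  { intros l Hl. pose proof (le_INR _ _ (HA l Hl)) as H3. simpl in H3. lra. }
  assert (Hprof : forall l j, (l < nL)%nat -> In j (agents_of m inL l) ->
                    0 <= xs j l /\ 0 <= ps j l <= M).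
  { intros l j Hl Hj. apply in_agents_of in Hj as [Hjm Hjl].
    destruct (Hadm j Hjm l) as [[Hx _] Hp]; [apply in_goods_of; auto | auto]. }
  set (pnull := fun l => avg_others m inL ps i l).
  assert (Hnull_adm : admissible nL inL c M i (fun _ => 0) pnull).
  { intros l Hl. apply in_goods_of in Hl as [Hl HinL].
    split; [split; [lra | auto] |].
    apply avg_others_bounds; [apply in_agents_of; auto | auto |].
    intros j Hj. apply (Hprof l j Hl Hj). }
  assert (Hnull_tax : tax m nL inL c w kappa gamma phi (upd xs i (fun _ => 0)) (upd ps i pnull) i <= 0).
  { apply sumR_nonpos. intros l Hl.
    pose proof Hl as [Hl' HinL]%in_goods_of.
    rewrite tax_il_null_deviation, (Hphi_val i l Hi Hl) by (auto; apply in_agents_of; auto).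
    apply compensation_nonpos; auto. intros j Hj. apply (Hprof l j Hl' Hj). }
  pose proof (Hbest i Hi _ _ Hnull_adm). lra.
Qed.
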